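(* There is no Belyi map $\mathbb{P}^1\to\mathbb{P}^1$ with passport $[5\,3/2^4/2^4]$, and there is no Belyi map $\mathbb{P}^1\to\mathbb{P}^1$ with passport $[5\,4\,3/2^6/2^4\,4]$.
   Context: A Belyi map on a compact Riemann surface $X$ is a nonconstant meromorphic function $f:X\to\mathbb{P}^1$ unramified outside $\{0,1,\infty\}$. Its passport $[a_1^{p_1}\cdots/b_1^{q_1}\cdots/c_1^{r_1}\cdots]$ lists the ramification indices of the points in $f^{-1}(0)$, $f^{-1}(1)$, $f^{-1}(\infty)$ respectively, with exponents denoting repetition (so e.g. $[5\,3/2^4/2^4]$ means degree 8, fiber over $0$ consisting of points of ramification indices 5 and 3, and fibers over $1$ and $\infty$ each consisting of four points of ramification index 2). *)

From mathcomp Require Import all_boot all_order all_algebra.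
Set Implicit Arguments. Unset Strict Implicit. Unset Printing Implicit Defensive.
Import GRing.Theory Num.Theory.
Local Open Scope ring_scope.

(* A rational function f : P^1 -> P^1 over an algebraically closed field C
   of characteristic 0 is given by a coprime pair (p, q) of polynomials,
   f = p / q.  Points of P^1 are [option C] with [None] = infinity. *)
Section Belyi.
Variable C : numClosedFieldType.

Definition rdeg (p q : {poly C}) : nat := (maxn (size p) (size q)).-1.

(* polynomial whose zeros (with multiplicity) form the finite part of the
   fiber f^{-1}(c): p - c q for finite c, q for c = infinity *)
Definition fib_poly (p q : {poly C}) (c : option C) : {poly C} :=
  match c with Some c => p - c *: q | None => q end.

(* multiplicity of the point P in the fiber over c, i.e. the ramification
   index e_P of f at P when f(P) = c, and 0 when f(P) <> c.
   At P = infinity: max(deg p,deg q) - deg(fib_poly c). *)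
Definition fmult (p q : {poly C}) (P c : option C) : nat :=
  match P with
  | Some x => mup x (fib_poly p q c)
  | None => (maxn (size p) (size q) - size (fib_poly p q c))%N
  end.

(* the fiber of f over c has ramification indices given (as a multiset)
   by the list [l]: there is a duplicate-free list of points containing
   every point of the fiber, whose multiplicities form a permutation of l *)
Definition fiber_type (p q : {poly C}) (c : option C) (l : seq nat) : Prop :=
  exists s : seq (option C),
    [/\ uniq s, (forall P, (0 < fmult p q P c)%N -> P \in s)
      & perm_eq [seq fmult p q P c | P <- s] l].

Definition is_Belyi_passport (p q : {poly C}) (l0 l1 linf : seq nat) : Prop :=
  [/\ coprimep p q /\ (0 < rdeg p q)%N,
      (* unramified outside {0,1,oo} *)
      (forall c : C, c != 0 -> c != 1 -> forall P, (fmult p q P (Some c) <= 1)%N),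
      fiber_type p q (Some 0) l0,
      fiber_type p q (Some 1) l1
    & fiber_type p q None linf].

Definition exists_Belyi (l0 l1 linf : seq nat) : Prop :=
  exists p q : {poly C}, is_Belyi_passport p q l0 l1 linf.

End Belyi.

From mathcomp Require Import all_boot all_order all_algebra zify ring.
Set Implicit Arguments. Unset Strict Implicit. Unset Printing Implicit Defensive.
Import GRing.Theory Num.Theory.

(* If all ramification indices over 1 and over oo are even, then q and p - q
   are constants times squares, q = b S^2 and p - q = b' R^2.  Over an
   algebraically closed field p = b' R^2 + b S^2 = (c R + d S) (c R - d S), and
   coprimality of p and q makes the two factors coprime binary forms of the
   same degree m, where 2m is the degree of p/q.  So the points over 0 split
   into the zeros of the two factors on P^1, and the ramification indices over
   0 split into two groups, each summing to m.  Neither {5, 3} nor {5, 4, 3}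
   admits such a split. *)

Definition equal_sum_split (l : seq nat) : Prop :=
  exists l1 l2, perm_eq (l1 ++ l2) l /\ sumn l1 = sumn l2.

Lemma equal_sum_splitP l :
  reflect (equal_sum_split l)
    (has (fun t => has (fun k => sumn (take k t) == sumn (drop k t))
                       (iota 0 (size t).+1))
         (permutations l)).
Proof.
apply: (iffP hasP) => [[t perm_t /hasP[k _ /eqP sum_k]]|[l1 [l2 [perm_l sum_l]]]].
  by exists (take k t), (drop k t); rewrite cat_take_drop -mem_permutations.
exists (l1 ++ l2); first by rewrite mem_permutations.
apply/hasP; exists (size l1); last by rewrite take_size_cat ?drop_size_cat ?sum_l.
by rewrite mem_iota size_cat /=; lia.
Qed.

Lemma equal_sum_split_perm l l' :
  perm_eq l l' -> equal_sum_split l -> equal_sum_split l'.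
Proof.
move=> perm_l [l1 [l2 [perm_l12 sum_l12]]].
by exists l1, l2; rewrite (perm_trans perm_l12).
Qed.

Lemma equal_sum_split_disjoint (T : eqType) (s : seq T) (f g : T -> nat) :
  (forall x, (f x == 0) || (g x == 0)) ->
  sumn (map f s) = sumn (map g s) ->
  equal_sum_split [seq f x + g x | x <- s].
Proof.
move=> fg0 sum_fg; pose g0 x := g x == 0.
have f0 x : ~~ g0 x -> f x = 0 by move: (fg0 x); rewrite /g0; case: eqP; case: eqP.
exists [seq f x | x <- s & g0 x], [seq g x | x <- s & ~~ g0 x]; split.
  apply: perm_trans (perm_map _ (permEl (perm_filterC g0 s))); rewrite map_cat.
  have -> : [seq f x + g x | x <- s & g0 x] = [seq f x | x <- s & g0 x].
    by apply/eq_in_map => x; rewrite mem_filter => /andP[/eqP-> _]; rewrite addn0.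
  have -> // : [seq f x + g x | x <- s & ~~ g0 x] = [seq g x | x <- s & ~~ g0 x].
  by apply/eq_in_map => x; rewrite mem_filter => /andP[/f0-> _].
move: sum_fg; rewrite !sumnE !big_map !big_filter => sum_fg.
rewrite (big_mkcond g0) (big_mkcond (predC g0)).
transitivity (\sum_(x <- s) f x).
  by apply: eq_bigr => x _; case: ifP => // /negbT /f0.
by rewrite sum_fg; apply: eq_bigr => x _; rewrite /= /g0; case: eqP.
Qed.

Lemma sum_count_mem (T : eqType) (s t : seq T) :
  uniq s -> {subset t <= s} -> \sum_(x <- s) count_mem x t = size t.
Proof.
move=> uniq_s; elim: t => [_|y t IH /allP/andP[s_y /allP t_s]] /=.
  by rewrite big1.
rewrite big_split /= IH // (_ : \sum_(x <- s) (y == x) = count_mem y s).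
  by rewrite count_uniq_mem ?s_y.
by rewrite -sum1_count [RHS]big_mkcond; apply: eq_bigr => x _; rewrite eq_sym.
Qed.

Local Open Scope ring_scope.

Section BinaryForms.
Variable F : fieldType.

(* The multiplicity at P of g seen as a binary form of degree N.-1 (so that
   size g <= N); None is the point at infinity. *)
Definition hmult (N : nat) (g : {poly F}) (P : option F) : nat :=
  match P with Some x => mup x g | None => (N - size g)%N end.

Lemma hmultM (NA NB : nat) (A B : {poly F}) P :
  A != 0 -> B != 0 -> (size A <= NA)%N -> (size B <= NB)%N ->
  hmult (NA + NB).-1 (A * B) P = (hmult NA A P + hmult NB B P)%N.
Proof.
move=> nz_A nz_B le_A le_B; case: P => [x|] /=; first exact: mupM.
have gt0_A : (0 < size A)%N by rewrite size_poly_gt0.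
have gt0_B : (0 < size B)%N by rewrite size_poly_gt0.
rewrite size_mul // -!subn1.
move: (size A) (size B) gt0_A gt0_B le_A le_B => a b; lia.
Qed.

Lemma hmult_coprime (N : nat) (A B : {poly F}) P :
  coprimep A B -> maxn (size A) (size B) = N ->
  (hmult N A P == 0)%N || (hmult N B P == 0)%N.
Proof.
move=> cop_AB max_AB; case: P => [x|] /=; last first.
  by rewrite !subn_eq0 -max_AB !geq_max !leqnn andbT orbC leq_total.
have [A_x|nA_x] := boolP (root A x); last by rewrite mupNroot.
by rewrite (mupNroot (coprimep_root cop_AB A_x)) orbT.
Qed.

End BinaryForms.

Section ClosedFieldBinaryForms.
Variable F : closedFieldType.

Lemma hmult_count_mem (N : nat) (g : {poly F}) :
  g != 0 -> (size g <= N)%N ->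
  exists2 t : seq (option F),
    size t = N.-1 & forall P, hmult N g P = count_mem P t.
Proof.
move=> nz_g le_gN; have [r Dg] := closed_field_poly_normal g.
have nz_lc : lead_coef g != 0 by rewrite lead_coef_eq0.
have size_g : size g = (size r).+1 by rewrite Dg size_scale // size_prod_XsubC.
exists (map Some r ++ nseq (N - size g) None).
  by rewrite size_cat size_map size_nseq; move: le_gN; rewrite size_g -subn1; lia.
case=> [x|] /=; rewrite count_cat count_nseq /= ?mul1n.
  rewrite mul0n addn0 count_map Dg -mul_polyC.
  rewrite mupM ?polyC_eq0 ?monic_neq0 ?monic_prod_XsubC //.
  by rewrite mupNroot ?rootC // mu_prod_XsubC.
by rewrite count_map (eq_count (a2 := pred0)) ?count_pred0.
Qed.

Lemma sum_hmult (N : nat) (g : {poly F}) (s : seq (option F)) :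
  g != 0 -> (size g <= N)%N -> uniq s ->
  (forall P, (0 < hmult N g P)%N -> P \in s) ->
  (\sum_(P <- s) hmult N g P = N.-1)%N.
Proof.
move=> nz_g le_gN uniq_s cover_s.
have [t size_t hmult_t] := hmult_count_mem nz_g le_gN.
rewrite (eq_bigr _ (fun P _ => hmult_t P)) sum_count_mem // => P t_P.
by apply: cover_s; rewrite hmult_t -has_count has_pred1.
Qed.

Lemma even_mup_sqr (g : {poly F}) :
  g != 0 -> (forall x, ~~ odd (mup x g)) ->
  exists (b : F) (S : {poly F}), b != 0 /\ g = b *: S ^+ 2.
Proof.
have [n] := ubnP (size g); elim: n g => // n IH g lt_gn nz_g even_g.
have [/eqP/size_poly1P [c nz_c ->]|] := eqVneq (size g) 1%N.
  by exists c, 1; rewrite expr1n alg_polyC.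
move=> /closed_rootP [a g_a].
have le2_mup : (2 <= mup a g)%N.
  have : (0 < mup a g)%N by rewrite -XsubC_dvd // dvdp_XsubCl.
  by move: (even_g a); case: (mup a g) => [|[|]].
have /dvdpP [h Dg] : ('X - a%:P) ^+ 2 %| g by rewrite -mup_geq.
have nz_h : h != 0 by apply: contraNneq nz_g => h0; rewrite Dg h0 mul0r.
have nz_X2 : ('X - a%:P) ^+ 2 != 0 by rewrite expf_neq0 // polyXsubC_eq0.
have even_h x : ~~ odd (mup x h).
  move: (even_g x); rewrite Dg mupM // mup_XsubCX oddD.
  by case: (a == x); rewrite addbF.
have size_g : size g = (size h).+2 by rewrite Dg size_mul // size_exp_XsubC addn3.
have lt_hn : (size h < n)%N by apply: ltnW; rewrite -ltnS -size_g.
have [b [S [nz_b Dh]]] := IH h lt_hn nz_h even_h.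
exists b, (S * ('X - a%:P)); split=> //.
by rewrite Dg Dh exprMn; apply/esym/scalerAl.
Qed.

End ClosedFieldBinaryForms.

Section AddSub.
Variables (F : fieldType) (U V : {poly F}).
Hypothesis two_neq0 : 2%:R != 0 :> F.

Let addsub_add : (U + V) + (U - V) = 2%:R *: U.
Proof. by rewrite scaler_nat; ring. Qed.

Let addsub_sub : (U + V) - (U - V) = 2%:R *: V.
Proof. by rewrite scaler_nat; ring. Qed.

Lemma size_add_sub : maxn (size (U + V)) (size (U - V)) = maxn (size U) (size V).
Proof.
have size_sub (A B : {poly F}) : (size (A - B)%R <= maxn (size A) (size B))%N.
  by rewrite -(size_polyN B); apply: size_polyD.
apply/eqP; rewrite eqn_leq !geq_max size_polyD size_sub.
rewrite -(size_scale U two_neq0) -(size_scale V two_neq0) -addsub_add -addsub_sub.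
by rewrite size_polyD size_sub.
Qed.

Lemma coprimep_add_sub : coprimep U V -> coprimep (U + V) (U - V).
Proof.
move=> /coprimepP cop_UV; apply/coprimepP => d d_add d_sub.
apply: cop_UV; rewrite -(dvdpZr _ _ two_neq0).
  by rewrite -addsub_add dvdp_add.
by rewrite -addsub_sub dvdp_sub.
Qed.

End AddSub.

Lemma maxn_size_sub (R : nzRingType) (p q : {poly R}) :
  maxn (size (p - q)) (size q) = maxn (size p) (size q).
Proof.
have size_sub : (size (p - q)%R <= maxn (size p) (size q))%N.
  by rewrite -(size_polyN q); apply: size_polyD.
apply/eqP; rewrite eqn_leq !geq_max size_sub !leq_maxr andbT /=.
by rewrite -{1}(subrK q p) size_polyD.
Qed.

Lemma size_scale_sqr (R : idomainType) (b : R) (S : {poly R}) :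
  b != 0 -> size (b *: S ^+ 2) = (size S).*2.-1.
Proof.
move=> nz_b; rewrite size_scale //; have [->|nz_S] := eqVneq S 0.
  by rewrite expr0n size_poly0.
have := size_exp S 2; rewrite (polySpred nz_S) (polySpred (expf_neq0 2 nz_S)) /=.
by move=> ->; rewrite muln2.
Qed.

Section Belyi.
Variables (C : numClosedFieldType) (p q : {poly C}).

Lemma fmultE P c :
  fmult p q P c = hmult (maxn (size p) (size q)) (fib_poly p q c) P.
Proof. by case: P. Qed.

Lemma fib_poly_neq0 c :
  coprimep p q -> (0 < rdeg p q)%N -> fib_poly p q c != 0.
Proof.
move=> /coprimepP cop_pq; apply: contraTneq => fib0.
rewrite /rdeg lt0n negbK -subn1 subn_eq0 geq_max.
case: c fib0 => [c /subr0_eq Dp|/= q0].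
  have /eqP size_q : size q == 1%N.
    by rewrite size_poly_eq1 cop_pq // Dp -mul_polyC dvdp_mull.
  by rewrite size_q leqnn andbT -size_q Dp size_scale_leq.
have /eqP size_p : size p == 1%N by rewrite size_poly_eq1 cop_pq ?q0 ?dvdp0.
by rewrite size_p q0 size_poly0.
Qed.

Lemma fiber_type_even_mup c l :
  fiber_type p q c l -> ~~ has odd l -> forall x, ~~ odd (mup x (fib_poly p q c)).
Proof.
case=> s [_ cover_s perm_s] /hasPn even_l x.
have [->//|mup_gt0] := posnP (mup x (fib_poly p q c)).
apply: (even_l (fmult p q (Some x) c)).
by rewrite -(perm_mem perm_s); apply: (map_f (fmult p q ^~ c)); apply: cover_s.
Qed.

Lemma even_mup_factor :
  coprimep p q -> q != 0 -> p - q != 0 ->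
  (forall x, ~~ odd (mup x q)) -> (forall x, ~~ odd (mup x (p - q))) ->
  exists A B : {poly C}, [/\ p = A * B, coprimep A B
    & (maxn (size A) (size B)).*2.-1 = maxn (size p) (size q)].
Proof.
move=> cop_pq nz_q nz_pq /(even_mup_sqr nz_q) [b [S [nz_b Dq]]].
move=> /(even_mup_sqr nz_pq) [b' [R [nz_b' Dpq]]].
pose c := sqrtC b'; pose d := sqrtC (- b).
have c2 : c ^+ 2 = b' := sqrtCK b'.
have d2 : d ^+ 2 = - b := sqrtCK (- b).
have nz_c : c != 0 by rewrite sqrtC_eq0.
have nz_d : d != 0 by rewrite sqrtC_eq0 oppr_eq0.
have two_neq0 : 2%:R != 0 :> C by rewrite pnatr_eq0.
exists (c *: R + d *: S), (c *: R - d *: S); split.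
- have -> : p = (p - q) + q by rewrite subrK.
  rewrite Dpq Dq -c2 -[b]opprK -d2 -!mul_polyC polyCN !polyC_exp.
  ring.
- apply: coprimep_add_sub => //; rewrite coprimepZl // coprimepZr // coprimep_sym.
  have : coprimep q (p - q) by rewrite addrC -mulN1r coprimep_addl_mul coprimep_sym.
  by rewrite Dpq Dq coprimepZl // coprimepZr // coprimep_pexpl // coprimep_pexpr.
- rewrite size_add_sub // !size_scale // -(maxn_size_sub p q) Dpq Dq.
  rewrite !size_scale_sqr //.
  by move: (size R) (size S) => m n; lia.
Qed.

Lemma even_fibers_split l0 l1 linf :
  coprimep p q -> (0 < rdeg p q)%N ->
  fiber_type p q (Some 0) l0 -> fiber_type p q (Some 1) l1 ->
  fiber_type p q None linf -> ~~ has odd l1 -> ~~ has odd linf ->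
  equal_sum_split l0.
Proof.
move=> cop_pq deg_pq [s [uniq_s cover_s perm_s]] F1 Finf even1 even_inf.
have nz_fib c := fib_poly_neq0 c cop_pq deg_pq.
have nz_p : p != 0 by have := nz_fib (Some 0); rewrite /= scale0r subr0.
have nz_pq : p - q != 0 by have := nz_fib (Some 1); rewrite /= scale1r.
have even_pq x : ~~ odd (mup x (p - q)).
  by have := fiber_type_even_mup F1 even1 x; rewrite /= scale1r.
have even_q := fiber_type_even_mup Finf even_inf.
have [A [B [Dp cop_AB size_AB]]] :=
  even_mup_factor cop_pq (nz_fib None) nz_pq even_q even_pq.
set M := maxn (size A) (size B) in size_AB.
have nz_A : A != 0 by apply: contraNneq nz_p => A0; rewrite Dp A0 mul0r.
have nz_B : B != 0 by apply: contraNneq nz_p => B0; rewrite Dp B0 mulr0.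
have fmult_AB P : fmult p q P (Some 0) = (hmult M A P + hmult M B P)%N.
  by rewrite fmultE /= scale0r subr0 -size_AB -addnn Dp hmultM ?leq_maxl ?leq_maxr.
have cover_AB P : (0 < hmult M A P)%N || (0 < hmult M B P)%N -> P \in s.
  by move=> pos_P; apply: cover_s; rewrite fmult_AB addn_gt0.
move: perm_s; rewrite (eq_map fmult_AB) => /equal_sum_split_perm; apply.
apply: equal_sum_split_disjoint => [P|]; first exact: hmult_coprime.
rewrite !sumnE !big_map !sum_hmult ?leq_maxl ?leq_maxr // => P pos_P.
  by apply: cover_AB; rewrite pos_P orbT.
by apply: cover_AB; rewrite pos_P.
Qed.

End Belyi.

Lemma no_Belyi_even_fibers (C : numClosedFieldType) l0 l1 linf :
  ~ equal_sum_split l0 -> ~~ has odd l1 -> ~~ has odd linf ->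
  ~ exists_Belyi C l0 l1 linf.
Proof.
move=> no_split even1 even_inf [p [q [[cop_pq deg_pq] _ F0 F1 Finf]]].
exact/no_split/(even_fibers_split cop_pq deg_pq F0 F1 Finf).
Qed.

Theorem mainTheorem12 (C : numClosedFieldType) :
  ~ exists_Belyi C [:: 5; 3]%N [:: 2; 2; 2; 2]%N [:: 2; 2; 2; 2]%N /\
  ~ exists_Belyi C [:: 5; 4; 3]%N [:: 2; 2; 2; 2; 2; 2]%N [:: 2; 2; 2; 2; 4]%N.
Proof.
by split; apply: no_Belyi_even_fibers => // /equal_sum_splitP; apply/negP.
Qed.
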